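(* Let $W_{(\alpha,\beta)}=(T_1,T_2)$ be a 2-variable weighted shift on $\ell^2(\mathbb{Z}_+^2)$, and let $$L=\begin{pmatrix} T_1^*T_1 & T_2^*T_1\\ T_1^*T_2 & T_2^*T_2\end{pmatrix},\qquad R=\begin{pmatrix} T_1T_1^* & T_1T_2^*\\ T_2T_1^* & T_2T_2^*\end{pmatrix}$$ acting on $\ell^2(\mathbb{Z}_+^2)\oplus\ell^2(\mathbb{Z}_+^2)$. For $n\ge 0$ let $\mathcal{K}(n)$ be the closed span of $\{e_{(k_1,k_2)}: k_1+k_2=n\}$. Then $\mathcal{K}(n)\oplus\mathcal{K}(n)$ reduces $L$ and $R$, and, denoting by $L|_{\mathcal{K}(n)}$, $R|_{\mathcal{K}(n)}$ the restrictions to it, $L|_{\mathcal{K}(n)}$ is unitarily equivalent to $$(\alpha_{(0,n)}^2)\oplus\Big[\bigoplus_{i=1}^n\begin{pmatrix}\alpha_{(i,n-i)}^2 & \alpha_{(i-1,n-i+1)}\beta_{(i,n-i)}\\ \alpha_{(i-1,n-i+1)}\beta_{(i,n-i)} & \beta_{(i-1,n-i+1)}^2\end{pmatrix}\Big]\oplus(\beta_{(n,0)}^2)$$ and $R|_{\mathcal{K}(n)}$ is unitarily equivalent to $$(0)\oplus\Big[\bigoplus_{i=1}^n\begin{pmatrix}\alpha_{(i-1,n-i)}^2 & \alpha_{(i-1,n-i)}\beta_{(i-1,n-i)}\\ \alpha_{(i-1,n-i)}\beta_{(i-1,n-i)} & \beta_{(i-1,n-i)}^2\end{pmatrix}\B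ig]\oplus(0).$$
   Context: Given bounded double-indexed sequences of positive reals $\alpha=(\alpha_{\mathbf{k}})$, $\beta=(\beta_{\mathbf{k}})$, $\mathbf{k}=(k_1,k_2)\in\mathbb{Z}_+^2$, the 2-variable weighted shift $W_{(\alpha,\beta)}=(T_1,T_2)$ acts on $\ell^2(\mathbb{Z}_+^2)$ with canonical orthonormal basis $\{e_{\mathbf{k}}\}$ by $T_1e_{\mathbf{k}}=\alpha_{\mathbf{k}}e_{\mathbf{k}+\varepsilon_1}$, $T_2e_{\mathbf{k}}=\beta_{\mathbf{k}}e_{\mathbf{k}+\varepsilon_2}$, with $\varepsilon_1=(1,0)$, $\varepsilon_2=(0,1)$. An operator matrix $(M_{ij})$ acts on $\mathcal{H}\oplus\mathcal{H}$ by $(h_1,h_2)\mapsto(M_{11}h_1+M_{12}h_2,\,M_{21}h_1+M_{22}h_2)$. For $n=0$ the middle direct sum is empty. *)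

From mathcomp Require Import all_boot all_algebra.
From mathcomp Require Import reals complex.
Set Implicit Arguments. Unset Strict Implicit. Unset Printing Implicit Defensive.
Import GRing.Theory Num.Theory.
Local Open Scope ring_scope.
Local Open Scope complex_scope.

Section Shift.
Variable R : realType.
Local Notation C := R[i].

(* a vector of l^2(Z_+^2) is viewed through its coordinates x k1 k2 = <x, e_(k1,k2)> *)
Definition vec := nat -> nat -> C.
Definition vec2 := (vec * vec)%type.

Variables (alpha beta : nat -> nat -> R).

(* T1 e_k = alpha_k e_(k+eps1) and its adjoint T1^* e_k = alpha_(k-eps1) e_(k-eps1) *)
Definition T1 (x : vec) : vec := fun k1 k2 =>
  if k1 is j.+1 then (alpha j k2)%:C * x j k2 else 0.
Definition T1adj (x : vec) : vec := fun k1 k2 => (alpha k1 k2)%:C * x k1.+1 k2.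
Definition T2 (x : vec) : vec := fun k1 k2 =>
  if k2 is j.+1 then (beta k1 j)%:C * x k1 j else 0.
Definition T2adj (x : vec) : vec := fun k1 k2 => (beta k1 k2)%:C * x k1 k2.+1.

Definition vadd (x y : vec) : vec := fun k1 k2 => x k1 k2 + y k1 k2.

Definition Lop (h : vec2) : vec2 :=
  (vadd (T1adj (T1 h.1)) (T2adj (T1 h.2)), vadd (T1adj (T2 h.1)) (T2adj (T2 h.2))).
Definition Rop (h : vec2) : vec2 :=
  (vadd (T1 (T1adj h.1)) (T1 (T2adj h.2)), vadd (T2 (T1adj h.1)) (T2 (T2adj h.2))).

End Shift.

Definition inKn2 (R : realType) (n : nat) (h : vec2 R) : Prop :=
  forall k1 k2, (k1 + k2 != n)%N -> h.1 k1 k2 = 0 /\ h.2 k1 k2 = 0.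
Definition inKn2perp (R : realType) (n : nat) (h : vec2 R) : Prop :=
  forall k1 k2, (k1 + k2 = n)%N -> h.1 k1 k2 = 0 /\ h.2 k1 k2 = 0.

Definition reduces_Kn2 (R : realType) (n : nat) (T : vec2 R -> vec2 R) : Prop :=
  (forall h, inKn2 n h -> inKn2 n (T h)) /\
  (forall h, inKn2perp n h -> inKn2perp n (T h)).

Definition basis_vec (R : realType) (n : nat) (p : 'I_(n.+1 + n.+1)) : vec2 R :=
  match split p with
  | inl k => (fun k1 k2 => if (k1 == k :> nat) && (k2 == n - k)%N then 1 else 0, fun _ _ => 0)
  | inr k => (fun _ _ => 0, fun k1 k2 => if (k1 == k :> nat) && (k2 == n - k)%N then 1 else 0)
  end.
Definition coord (R : realType) (n : nat) (p : 'I_(n.+1 + n.+1)) (h : vec2 R) : R[i] :=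
  match split p with
  | inl k => h.1 k (n - k)%N
  | inr k => h.2 k (n - k)%N
  end.

Definition restr_mx (R : realType) (n : nat) (T : vec2 R -> vec2 R)
  : 'M[R[i]]_(n.+1 + n.+1) :=
  \matrix_(p, q) coord p (T (basis_vec R q)).

Definition unitary_mx (R : realType) (m : nat) (U : 'M[R[i]]_m) : Prop :=
  U *m (map_mx conjc U)^T = 1%:M /\ (map_mx conjc U)^T *m U = 1%:M.
Definition unitarily_equiv (R : realType) (m : nat) (A B : 'M[R[i]]_m) : Prop :=
  exists U : 'M[R[i]]_m, unitary_mx U /\ B = U *m A *m (map_mx conjc U)^T.

(* The (2n+2)x(2n+2) matrix  (c0) (+) [ (+)_{i=1}^n [[a i, b i],[b i, d i]] ] (+) (cN):
   index 0 is c0, indices 2i-1, 2i carry the i-th 2x2 block, index 2n+1 is cN. *)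
Definition blockdiag (R : realType) (n : nat) (c0 cN : R) (a b d : nat -> R)
  : 'M[R[i]]_(n.+1 + n.+1) :=
  \matrix_(p, q)
    (let p := nat_of_ord p in let q := nat_of_ord q in
     if (p == 0%N) && (q == 0%N) then c0%:C
     else if (p == n.*2.+1) && (q == n.*2.+1) then cN%:C
     else if [&& (0 < p <= n.*2)%N, (0 < q <= n.*2)%N & (p.+1./2 == q.+1./2)%N] then
       (let i := p.+1./2 in
        if odd p && odd q then (a i)%:C
        else if ~~ odd p && ~~ odd q then (d i)%:C
        else (b i)%:C)
     else 0).

(* T1 and T2 raise the total degree k1 + k2 by one and their
   adjoints lower it by one, so L and R map vectors vanishing on a diagonal
   k1 + k2 = m to vectors vanishing there; since K(n) (+) K(n) is the set of
   vectors vanishing on every other diagonal, it reduces L and R.  In the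
   basis (e_(k,n-k), 0), (0, e_(k,n-k)) both restrictions only couple
   (e_(i,n-i), 0) with (0, e_(i-1,n-i+1)); listing the basis so that these
   pairs are adjacent is a permutation, hence a unitary, and turns the matrix
   into the block diagonal form. *)

From Pilot Require Import Defs.
From mathcomp Require Import all_boot all_algebra.
From mathcomp Require Import reals complex.
From mathcomp Require Import fingroup perm zify.
Set Implicit Arguments. Unset Strict Implicit. Unset Printing Implicit Defensive.
Import GRing.Theory Num.Theory.
Local Open Scope ring_scope.
Local Open Scope complex_scope.

Section PermutationEquivalence.
Variables (R : realType) (m : nat).

Lemma conjc_perm_mx (s : 'S_m) : map_mx conjc (perm_mx s : 'M[R[i]]_m) = perm_mx s.
Proof. by apply/matrixP => i j; rewrite !mxE conjc_nat. Qed.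

Lemma perm_mx_unitary (s : 'S_m) : unitary_mx (perm_mx s : 'M[R[i]]_m).
Proof. by rewrite /unitary_mx conjc_perm_mx tr_perm_mx -!perm_mxM mulgV mulVg perm_mx1. Qed.

Lemma unitarily_equiv_perm (s : 'S_m) (A B : 'M[R[i]]_m) :
  (forall i j, B (s i) (s j) = A i j) -> unitarily_equiv A B.
Proof.
move=> eqBA; exists (perm_mx s^-1); split; first exact: perm_mx_unitary.
apply/matrixP => i j; rewrite conjc_perm_mx tr_perm_mx invgK.
by rewrite -row_permE -[X in _ *m perm_mx X](invgK s) -col_permE !mxE -eqBA !permKV.
Qed.

End PermutationEquivalence.

Section DiagonalInvariance.
Variables (R : realType) (alpha beta : nat -> nat -> R).

Definition vanishes_on_diag (m : nat) (x : vec R) : Prop :=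
  forall k1 k2, (k1 + k2 = m)%N -> x k1 k2 = 0.

Lemma inKn2perpP m (h : vec2 R) :
  inKn2perp m h <-> vanishes_on_diag m h.1 /\ vanishes_on_diag m h.2.
Proof.
split=> [hm | [h1m h2m] k1 k2 k_eq]; last by rewrite h1m ?h2m.
by split=> k1 k2 /hm[].
Qed.

Lemma vadd_vanishes m x y :
  vanishes_on_diag m x -> vanishes_on_diag m y -> vanishes_on_diag m (vadd x y).
Proof. by move=> xm ym k1 k2 k_eq; rewrite /vadd xm ?ym ?addr0. Qed.

Lemma T1_vanishes m x :
  (0 < m -> vanishes_on_diag m.-1 x)%N -> vanishes_on_diag m (T1 alpha x).
Proof. by move=> xm [|k1] k2 //= k_eq; rewrite xm ?mulr0 //; lia. Qed.

Lemma T2_vanishes m x :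
  (0 < m -> vanishes_on_diag m.-1 x)%N -> vanishes_on_diag m (T2 beta x).
Proof. by move=> xm k1 [|k2] //= k_eq; rewrite xm ?mulr0 //; lia. Qed.

Lemma T1adj_vanishes m x :
  vanishes_on_diag m.+1 x -> vanishes_on_diag m (T1adj alpha x).
Proof. by move=> xm k1 k2 k_eq; rewrite /T1adj xm ?mulr0 //; lia. Qed.

Lemma T2adj_vanishes m x :
  vanishes_on_diag m.+1 x -> vanishes_on_diag m (T2adj beta x).
Proof. by move=> xm k1 k2 k_eq; rewrite /T2adj xm ?mulr0 //; lia. Qed.

Lemma Lop_inKn2perp m h : inKn2perp m h -> inKn2perp m (Lop alpha beta h).
Proof.
move=> /inKn2perpP[h1m h2m]; apply/inKn2perpP.
by split; apply: vadd_vanishes;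
  [apply: T1adj_vanishes | apply: T2adj_vanishes | apply: T1adj_vanishes | apply: T2adj_vanishes];
  [apply: T1_vanishes | apply: T1_vanishes | apply: T2_vanishes | apply: T2_vanishes].
Qed.

Lemma Rop_inKn2perp m h : inKn2perp m h -> inKn2perp m (Rop alpha beta h).
Proof.
move=> /inKn2perpP[h1m h2m]; apply/inKn2perpP.
by split; apply: vadd_vanishes;
  [apply: T1_vanishes | apply: T1_vanishes | apply: T2_vanishes | apply: T2_vanishes] => m_gt0;
  [apply: T1adj_vanishes | apply: T2adj_vanishes | apply: T1adj_vanishes | apply: T2adj_vanishes];
  rewrite prednK.
Qed.

Lemma reduces_Kn2_of_inKn2perp (T : vec2 R -> vec2 R) n :
  (forall m h, inKn2perp m h -> inKn2perp m (T h)) -> reduces_Kn2 n T.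
Proof.
move=> Tperp; split=> [h hn k1 k2 k_neq | h]; last exact: Tperp.
by apply: (Tperp (k1 + k2)) => // j1 j2 j_eq; apply: hn; rewrite j_eq.
Qed.

End DiagonalInvariance.

Section PairedBlocks.
Variables (R : realType) (n : nat).
Local Notation N := (n.+1 + n.+1).

Definition pair_mx (a b d : nat -> R) : 'M[R[i]]_N :=
  \matrix_(p, q)
    match split p, split q with
    | inl i, inl j => if i == j :> nat then (a i)%:C else 0
    | inr i, inr j => if i == j :> nat then (d i)%:C else 0
    | inl i, inr j => if i == j.+1 :> nat then (b i)%:C else 0
    | inr i, inl j => if j == i.+1 :> nat then (b j)%:C else 0
    end.

(* (e_(k,n-k), 0) goes to position 2k-1 and (0, e_(k,n-k)) to 2k+2, so that
   block i of [blockdiag] (positions 2i-1 and 2i) receives a coupled pair; the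
   uncoupled (e_(0,n), 0) and (0, e_(n,0)) go to the ends 0 and 2n+1. *)
Definition interleave (u : 'I_n.+1 + 'I_n.+1) : nat :=
  match u with inl k => k.*2.-1 | inr k => minn k.*2.+2 n.*2.+1 end.

Lemma interleave_lt u : (interleave u < N)%N.
Proof. by case: u => k /=; have := ltn_ord k; lia. Qed.

Lemma interleave_inj : injective interleave.
Proof.
move=> [] k [] k' /= eqk; have := ltn_ord k; have := ltn_ord k'; try lia;
  by move=> *; congr (_ _); apply: ord_inj; lia.
Qed.

Lemma interleave_ord_inj : injective (fun p : 'I_N => Ordinal (interleave_lt (split p))).
Proof. by move=> p q /(congr1 val)/interleave_inj/(can_inj splitK). Qed.

Lemma pair_mx_blockdiag (a b d : nat -> R) c0 cN a' b' d' :
  c0 = a 0%N -> cN = d n ->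
  (forall i, 0 < i <= n -> [/\ a' i = a i, b' i = b i & d' i = d i.-1])%N ->
  unitarily_equiv (pair_mx a b d) (blockdiag n c0 cN a' b' d').
Proof.
move=> -> -> blocks; apply: (unitarily_equiv_perm (s := perm interleave_ord_inj)) => p q.
rewrite !permE !mxE /=.
case: (split p) => i; case: (split q) => j /=;
  have := ltn_ord i; have := ltn_ord j => j_lt i_lt.
all: repeat case: ifP => ?; try (exfalso; lia); try done; f_equal.
all: try match goal with |- _ ?x = _ =>
  have [a'E b'E d'E] := blocks x ltac:(lia); rewrite ?a'E ?b'E ?d'E end.
all: f_equal; lia.
Qed.

End PairedBlocks.

Section RestrictedMatrices.
Variables (R : realType) (alpha beta : nat -> nat -> R) (n : nat).

Ltac pair_mx_entrywise :=
  apply/matrixP; intros p q; rewrite !mxE /Defs.coord /basis_vec;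
  case: (split p); intros i; case: (split q); intros j;
  rewrite /Lop /Rop /vadd /T1adj /T2adj /T1 /T2 /=;
  move: (nat_of_ord i) (ltn_ord i) (nat_of_ord j) (ltn_ord j); clear p q i j;
  intros i i_lt j j_lt; destruct (n - i)%N as [|m] eqn:E; destruct i as [|i];
  repeat case: ifP => ?; rewrite ?mulr0 ?mulr1 ?addr0 ?add0r //; try (exfalso; lia);
  rewrite ?rmorphXn ?rmorphM ?expr2 /=;
  first [ by f_equal; f_equal; f_equal; lia | by rewrite mulrC; f_equal; f_equal; f_equal; lia ].

Lemma restr_mx_Lop : restr_mx n (Lop alpha beta) =
  pair_mx n (fun i => alpha i (n - i) ^+ 2) (fun i => alpha i.-1 (n - i).+1 * beta i (n - i))
    (fun i => beta i (n - i) ^+ 2).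
Proof. by pair_mx_entrywise. Qed.

Lemma restr_mx_Rop : restr_mx n (Rop alpha beta) =
  pair_mx n (fun i => if i is j.+1 then alpha j (n - i) ^+ 2 else 0)
    (fun i => alpha i.-1 (n - i) * beta i.-1 (n - i))
    (fun i => if (n - i)%N is m.+1 then beta i m ^+ 2 else 0).
Proof. by pair_mx_entrywise. Qed.

End RestrictedMatrices.

Theorem theorem3p1 (R : realType) (alpha beta : nat -> nat -> R)
  (Hapos : forall k1 k2, 0 < alpha k1 k2) (Hbpos : forall k1 k2, 0 < beta k1 k2)
  (Habnd : exists M : R, forall k1 k2, alpha k1 k2 <= M /\ beta k1 k2 <= M)
  (n : nat) :
  [/\ reduces_Kn2 n (Lop alpha beta),
      reduces_Kn2 n (Rop alpha beta),
      unitarily_equiv (restr_mx n (Lop alpha beta))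
        (blockdiag n (alpha 0%N n ^+ 2) (beta n 0%N ^+ 2)
           (fun i => alpha i (n - i)%N ^+ 2)
           (fun i => alpha i.-1 (n - i).+1 * beta i (n - i)%N)
           (fun i => beta i.-1 (n - i).+1 ^+ 2))
    & unitarily_equiv (restr_mx n (Rop alpha beta))
        (blockdiag n 0 0
           (fun i => alpha i.-1 (n - i)%N ^+ 2)
           (fun i => alpha i.-1 (n - i)%N * beta i.-1 (n - i)%N)
           (fun i => beta i.-1 (n - i)%N ^+ 2))].
Proof.
split; [exact/reduces_Kn2_of_inKn2perp/Lop_inKn2perp | exact/reduces_Kn2_of_inKn2perp/Rop_inKn2perp | |].
- rewrite restr_mx_Lop; apply: pair_mx_blockdiag => [||i /andP[i_gt0 i_le_n]].
  + by rewrite subn0.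
  + by rewrite subnn.
  + by split=> //; congr (beta _ _ ^+ 2); lia.
- rewrite restr_mx_Rop; apply: pair_mx_blockdiag => [||i /andP[i_gt0 i_le_n]].
  + by [].
  + by rewrite subnn.
  + split=> //; first by case: i i_gt0 {i_le_n}.
    by rewrite (_ : n - i.-1 = (n - i).+1)%N; last lia.
Qed.
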